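(* Let $\mathcal D$ be a distribution of $(x,y)\in\mathbb R^d\times\{-1,+1\}$ with $x$ having finite second moments, let $\lambda>0$, and let $w^*=(w_1^*,\dots,w_d^* )$ be a minimizer of $\mathcal L(w)=\mathbb E_{(x,y)\sim\mathcal D}[\max(0,1-yw^\top x)]+\frac{\lambda}{2}\|w\|_2^2$. Suppose that the coordinates of $x$ are mutually independent conditionally on $y$. If a coordinate $i$ satisfies $\mathbb E[x_i\mid y=-1]\le 0\le \mathbb E[x_i\mid y=1]$, then $w_i^*\ge 0$. If instead $\mathbb E[x_i\mid y=1]\le 0\le \mathbb E[x_i\mid y=-1]$, then $w_i^*\le 0$. *)

From HB Require Import structures.
From mathcomp Require Import all_boot all_order all_algebra.
From mathcomp Require Import all_classical all_reals all_analysis.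
Set Implicit Arguments. Unset Strict Implicit. Unset Printing Implicit Defensive.
Import Order.TTheory GRing.Theory Num.Theory.
Local Open Scope classical_set_scope.
Local Open Scope ring_scope.

Definition evY {T : Type} {R : realType} (Y : T -> R) (c : R) : set T :=
  [set t | Y t = c].

Definition cond_prob {dT : measure_display} {T : measurableType dT} {R : realType}
  (P : probability T R) (Y : T -> R) (c : R) (A : set T) : R :=
  fine (P (A `&` evY Y c)) / fine (P (evY Y c)).

Definition cond_exp {dT : measure_display} {T : measurableType dT} {R : realType}
  (P : probability T R) (Z : T -> R) (Y : T -> R) (c : R) : R :=
  fine (\int[P]_(t in evY Y c) (Z t)%:E) / fine (P (evY Y c)).

(* The coordinates X_0, ..., X_{d-1} are mutually independent conditionally
   on Y = c: product rule for every family of measurable sets (taking B i = setT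
   gives the product rule for every subfamily). *)
Definition cond_mutually_independent {dT : measure_display} {T : measurableType dT}
  {R : realType} (P : probability T R) (d : nat) (X : 'I_d -> T -> R)
  (Y : T -> R) (c : R) : Prop :=
  forall B : 'I_d -> set R, (forall i, measurable (B i)) ->
    cond_prob P Y c (\bigcap_(i in [set: 'I_d]) (X i @^-1` B i)) =
    \prod_(i < d) cond_prob P Y c (X i @^-1` B i).

Definition hinge_objective {dT : measure_display} {T : measurableType dT}
  {R : realType} (P : probability T R) (d : nat) (X : 'I_d -> T -> R)
  (Y : T -> R) (lambda : R) (w : 'I_d -> R) : \bar R :=
  (\int[P]_t (Num.max 0 (1 - Y t * \sum_(i < d) w i * X i t))%:E
   + (lambda / 2 * \sum_(i < d) w i ^+ 2)%:E)%E.

(* Fix a class c in {1, -1} and a coordinate i, and let w0 be w with w_i set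
   to 0.  On {Y = c} the margin of w is u - c w_i X_i, where
   u = 1 - c sum_(j != i) w_j X_j is the margin of w0, and
     max(0, u) <= max(0, u - c w_i X_i) + c w_i X_i 1{u > 0}.
   The event {u > 0} lies in sigma(X_j : j != i), which by the pi-lambda theorem
   is independent of X_i given Y = c; so the correction term integrates over
   {Y = c} to c w_i E[X_i | Y = c] P(u > 0, Y = c), which is <= 0 under the sign
   hypotheses.  Hence zeroing w_i does not increase the hinge risk, while it
   strictly decreases the penalty lambda/2 |w|^2 when w_i != 0: a minimizer
   cannot have a weight of the wrong sign. *)

From HB Require Import structures.
From mathcomp Require Import all_boot all_order all_algebra.
From mathcomp Require Import all_classical all_reals all_analysis.
From mathcomp Require Import measurable_realfun ring lra.
Import Order.TTheory GRing.Theory Num.Theory.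
Local Open Scope classical_set_scope.
Local Open Scope ring_scope.

Section proportional_law.
Local Open Scope ereal_scope.
Context {R : realType} {dT : measure_display} {T : measurableType dT}.

Lemma ge0_integral_mrestr (mu : {measure set T -> \bar R}) (E : set T)
    (mE : measurable E) (h : T -> \bar R) :
  measurable_fun setT h -> (forall x, 0 <= h x) ->
  \int[mrestr mu mE]_x h x = \int[mu]_(x in E) h x.
Proof.
move=> mh h0.
rewrite -(setUv E) ge0_integral_setU //; last 3 first.
- exact: measurableC.
- by rewrite setUv.
- by rewrite disj_set2E setICr.
rewrite (@eq_measure_integral _ _ _ E mu); last first.
  by move=> A mA AE; change (mu (A `&` E) = mu A); rewrite setIidl.
rewrite (@eq_measure_integral _ _ _ (~` E) mzero); last first.
  move=> A mA AE; change (mu (A `&` E) = 0).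
  suff -> : A `&` E = set0 by exact: measure0.
  by apply/seteqP; split => x //= [/AE + ?].
by rewrite integral_measure_zero adde0.
Qed.

Variable mu : {finite_measure set T -> \bar R}.

Definition proportional_law (Z : T -> R) (E F : set T) :=
  forall B, measurable B ->
    mu (Z @^-1` B `&` E) * mu F = mu (Z @^-1` B `&` F) * mu E.

Lemma finite_measureE (A : set T) : measurable A -> mu A = (fine (mu A))%:E.
Proof. by move=> mA; rewrite fineK // fin_num_measure. Qed.

Lemma finite_measureM (A B : set T) : measurable A -> measurable B ->
  mu A * mu B = (fine (mu A) * fine (mu B))%:E.
Proof. by move=> mA mB; rewrite EFinM -!finite_measureE. Qed.

Section integral.
Context {Z : T -> R} {E F : set T}.
Hypotheses (mZ : measurable_fun setT Z) (mE : measurable E) (mF : measurable F)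
  (hZ : proportional_law Z E F).

(* The pushforwards of [mu(F) mu|_E] and [mu(E) mu|_F] under [Z] coincide. *)
Lemma ge0_integral_proportional_law (g : R -> \bar R) :
  measurable_fun setT g -> (forall x, 0 <= g x) ->
  (\int[mu]_(x in E) g (Z x)) * mu F = (\int[mu]_(x in F) g (Z x)) * mu E.
Proof.
move=> mg g0.
pose kF : {nonneg R} := NngNum (fine_ge0 (measure_ge0 mu F)).
pose kE : {nonneg R} := NngNum (fine_ge0 (measure_ge0 mu E)).
pose mEF := pushforward (mscale kF (mrestr mu mE)) Z.
pose mFE := pushforward (mscale kE (mrestr mu mF)) Z.
have mgZ : measurable_fun setT (g \o Z) by exact: measurableT_comp.
have gZ0 x : 0 <= (g \o Z) x by exact: g0.
have : \int[mEF]_x g x = \int[mFE]_x g x.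
  apply: eq_measure_integral => A mA _.
  rewrite /mEF /mFE /= /pushforward /mscale /mrestr /=.
  by rewrite -!finite_measureE // muleC hZ // muleC.
rewrite !ge0_integral_pushforward // preimage_setT !ge0_integral_mscale //.
rewrite !ge0_integral_mrestr //= => e.
by rewrite -!finite_measureE // in e; rewrite muleC e muleC.
Qed.

Lemma integral_proportional_law : mu.-integrable setT (EFin \o Z) ->
  (\int[mu]_(x in E) (Z x)%:E) * mu F = (\int[mu]_(x in F) (Z x)%:E) * mu E.
Proof.
move=> iZ.
have mEFin : measurable_fun setT (@EFin R) by exact/measurable_EFinP.
have fin_parts D : measurable D ->
    \int[mu]_(x in D) (EFin \o Z)^\+ x \is a fin_num /\
    \int[mu]_(x in D) (EFin \o Z)^\- x \is a fin_num.
  move=> mD; have iD := integrableS measurableT mD (subsetT D) iZ.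
  by split; apply: integrable_fin_num => //;
    [exact: integrable_funepos | exact: integrable_funeneg].
have [fE1 fE2] := fin_parts E mE; have [fF1 fF2] := fin_parts F mF.
rewrite (integralE _ _ (EFin \o Z)) (integralE _ _ (EFin \o Z)).
rewrite muleBl ?fin_num_measure //; last by apply: fin_num_adde_defl; rewrite fin_numN.
rewrite [RHS]muleBl ?fin_num_measure //; last by apply: fin_num_adde_defl; rewrite fin_numN.
rewrite funepos_comp funeneg_comp; congr (_ - _);
  apply: ge0_integral_proportional_law => //;
  [exact: measurable_funepos | exact: measurable_funeneg].
Qed.

End integral.

(* For fixed [B] both sides are finite measures in [C], so agreement on the
   pi-system [G] propagates to [<<s G >>] by uniqueness of measures. *)
Lemma sigma_proportional_law (Z : T -> R) (F : set T) (G : set (set T)) :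
  measurable_fun setT Z -> measurable F ->
  G `<=` measurable -> setI_closed G ->
  (forall C, G C -> proportional_law Z (C `&` F) F) ->
  forall C, <<s G >> C -> proportional_law Z (C `&` F) F.
Proof.
move=> mZ mF mG GI GZ C GC B mB.
have mZB : measurable (Z @^-1` B `&` F).
  by apply: measurableI => //; rewrite -[X in measurable X]setTI; exact: mZ.
pose kF : {nonneg R} := NngNum (fine_ge0 (measure_ge0 mu F)).
pose kZB : {nonneg R} := NngNum (fine_ge0 (measure_ge0 mu (Z @^-1` B `&` F))).
pose m1 : {measure set T -> \bar R} := mscale kF (mrestr mu mZB).
pose m2 : {measure set T -> \bar R} := mscale kZB (mrestr mu mF).
have m1E A : m1 A = mu (Z @^-1` B `&` (A `&` F)) * mu F.
  rewrite /m1 /= /mscale /= -finite_measureE // muleC.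
  by rewrite setICA.
have m2E A : m2 A = mu (Z @^-1` B `&` F) * mu (A `&` F).
  by rewrite /m2 /= /mscale /= -finite_measureE // muleC.
have GT : [set X | G X /\ X `<=` setT] = G.
  by apply/seteqP; split => [X []|X GX].
have m1T : m1 setT = m2 setT by rewrite m1E m2E !setTI muleC.
have m1G A : G A -> m1 A = m2 A by move=> GA; rewrite m1E m2E; exact: GZ.
have m1_fin : m1 setT < +oo.
  by rewrite m1E ltey_eq fin_numM ?fin_num_measure // setTI.
suff : m1 C = m2 C by rewrite m1E m2E.
move: GC; rewrite -GT.
apply: (@g_sigma_algebra_measure_unique_trace _ _ _ G setT measurableT _ _ m1 m2 m1T _ m1_fin);
  rewrite ?GT //.
Qed.
End proportional_law.

Lemma measurable_evY {R : realType} {dT : measure_display} {T : measurableType dT}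
    (Y : T -> R) (c : R) :
  measurable_fun setT Y -> measurable (evY Y c).
Proof.
by move=> mY; rewrite /evY -[X in measurable X]setTI; exact: (mY _ [set c]).
Qed.

Lemma max0_le_max0B {R : realDomainType} (u v : R) :
  Num.max 0 u <= Num.max 0 (u - v) + (if 0 < u then v else 0).
Proof.
case: ifPn => [u_gt0|]; last by rewrite -leNgt addr0 => /max_l ->; rewrite le_max lexx.
by rewrite (max_r (ltW u_gt0)) -lerBlDr le_max lexx orbT.
Qed.

Definition zero_coord {R : nmodType} {d : nat} (w : 'I_d -> R) (i : 'I_d) (j : 'I_d) : R :=
  if j == i then 0 else w j.

Lemma sum_zero_coord {R : pzSemiRingType} {d : nat} (w x : 'I_d -> R) (i : 'I_d) :
  \sum_(j < d) zero_coord w i j * x j = \sum_(j < d | j != i) w j * x j.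
Proof.
rewrite [RHS]big_mkcond; apply: eq_bigr => j _.
by rewrite /zero_coord; case: eqP => _ //=; rewrite mul0r.
Qed.

Lemma sum_sqr_zero_coord_lt {R : realDomainType} {d : nat} (w : 'I_d -> R) (i : 'I_d) :
  w i != 0 -> \sum_(j < d) zero_coord w i j ^+ 2 < \sum_(j < d) w j ^+ 2.
Proof.
move=> wi_neq0; rewrite [ltRHS](bigD1 i) //= [ltLHS](bigD1 i) //=.
rewrite {1}/zero_coord eqxx expr0n add0r.
rewrite (eq_bigr (fun j => w j ^+ 2)) => [|j /negbTE ji]; last by rewrite /zero_coord ji.
by rewrite ltrDr lt_def sqrf_eq0 wi_neq0 sqr_ge0.
Qed.

Section hinge_loss.
Context {R : realType} {dT : measure_display} {T : measurableType dT}.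
Context {d : nat} (X : 'I_d -> T -> R) (Y : T -> R).

Definition hinge_loss (w : 'I_d -> R) (t : T) : R :=
  Num.max 0 (1 - Y t * \sum_(j < d) w j * X j t).

Lemma hinge_loss_ge0 w t : 0 <= hinge_loss w t.
Proof. by rewrite le_max lexx. Qed.

Lemma measurable_hinge_loss w :
  (forall j, measurable_fun setT (X j)) -> measurable_fun setT Y ->
  measurable_fun setT (fun t => (hinge_loss w t)%:E).
Proof.
move=> mX mY; apply/measurable_EFinP.
apply: measurable_maxr; first exact: measurable_cst.
apply: measurable_funB; first exact: measurable_cst.
apply: measurable_funM => //; apply: measurable_sum => j.
exact: measurable_funM (measurable_cst _) (mX j).
Qed.

End hinge_loss.

Section conditional_independence.
Local Open Scope ereal_scope.
Context {R : realType} {dT : measure_display} {T : measurableType dT}.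
Variables (P : probability T R) (d : nat) (X : 'I_d -> T -> R) (Y : T -> R).
Hypotheses (mX : forall j, measurable_fun setT (X j)) (mY : measurable_fun setT Y).
Variables (i : 'I_d) (c : R).
Hypotheses (Yc_gt0 : 0 < P (evY Y c)) (hind : cond_mutually_independent P X Y c).

Let mYc : measurable (evY Y c) := measurable_evY Y c mY.

Let fine_PYc_neq0 : fine (P (evY Y c)) != 0%R.
Proof. by apply: lt0r_neq0; rewrite fine_gt0 // Yc_gt0 ltey_eq fin_num_measure. Qed.

(* A pi-system generating sigma(X_j : j != i). *)

Definition cylinders_off : set (set T) := [set C | exists B : 'I_d -> set R,
  [/\ forall j, measurable (B j), B i = setT &
      C = \bigcap_(j in [set: 'I_d]) X j @^-1` B j]].

Lemma cylinders_off_measurable : cylinders_off `<=` measurable.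
Proof.
move=> _ [B [mB _ ->]]; apply: fin_bigcap_measurable; first exact: finite_finset.
by move=> j _; rewrite -[X in measurable X]setTI; exact: mX.
Qed.

Lemma cylinders_off_setI : setI_closed cylinders_off.
Proof.
move=> _ _ [BA [mBA BAi ->]] [BB [mBB BBi ->]].
exists (fun j => BA j `&` BB j); split.
- by move=> j; exact: measurableI.
- by rewrite BAi BBi setIT.
- by rewrite -bigcapI; apply: eq_bigcapr => j _; rewrite preimage_setI.
Qed.

Lemma cond_probT : (cond_prob P Y c setT = 1)%R.
Proof.
by rewrite /cond_prob setTI divff.
Qed.

Lemma cond_prob_setI_cylinders_off (B0 : set R) (C : set T) :
  measurable B0 -> cylinders_off C ->
  cond_prob P Y c (X i @^-1` B0 `&` C) =
  (cond_prob P Y c (X i @^-1` B0) * cond_prob P Y c C)%R.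
Proof.
move=> mB0 [B [mB Bi ->]].
pose B' j := if j == i then B0 else B j.
have mB' j : measurable (B' j) by rewrite /B'; case: eqP.
have -> : X i @^-1` B0 `&` \bigcap_(j in [set: 'I_d]) X j @^-1` B j =
    \bigcap_(j in [set: 'I_d]) X j @^-1` B' j.
  apply/seteqP; split => t /=.
    by move=> [h1 h2] j _; rewrite /B'; case: eqP => [->//|_]; exact: h2.
  move=> h; split; first by have := h i I; rewrite /B' eqxx.
  by move=> j _; have := h j I; rewrite /B'; case: eqP => [->|//]; rewrite Bi.
rewrite (hind B' mB') (hind B mB) (bigD1 i) //= [in RHS](bigD1 i) //=.
rewrite /B' eqxx Bi preimage_setT cond_probT mul1r; congr (_ * _)%R.
by apply: eq_bigr => j /negbTE ->.
Qed.
Lemma cylinders_off_proportional (C : set T) : cylinders_off C ->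
  proportional_law P (X i) (C `&` evY Y c) (evY Y c).
Proof.
move=> GC B mB; have := cond_prob_setI_cylinders_off _ _ mB GC; rewrite /cond_prob => h.
have mXB : measurable (X i @^-1` B) by rewrite -[X in measurable X]setTI; exact: mX.
have mC := cylinders_off_measurable _ GC.
rewrite setIA !finite_measureM //; try by do ?apply: measurableI.
by congr EFin; rewrite -[X in (X * _)%R](divfK fine_PYc_neq0) h; field.
Qed.

Lemma sigma_cylinders_off_proportional (C : set T) : <<s cylinders_off >> C ->
  proportional_law P (X i) (C `&` evY Y c) (evY Y c).
Proof.
apply: sigma_proportional_law => //.
- exact: cylinders_off_measurable.
- exact: cylinders_off_setI.
- exact: cylinders_off_proportional.
Qed.

Lemma sigma_cylinders_off_measurable : <<s cylinders_off >> `<=` measurable.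
Proof.
apply: smallest_sub; [exact: sigma_algebra_measurable | exact: cylinders_off_measurable].
Qed.

Lemma measurable_coord_off (j : 'I_d) : j != i ->
  measurable_fun (setT : set (g_sigma_algebraType cylinders_off)) (X j).
Proof.
move=> ji _ B mB; rewrite setTI; apply: sub_gen_smallest.
exists (fun k => if k == j then B else setT); split.
- by move=> k; case: eqP.
- by rewrite eq_sym (negbTE ji).
- apply/seteqP; split => t /=.
    by move=> h k _; case: eqP => [->//|].
  by move=> h; have := h j I; rewrite eqxx.
Qed.

Lemma sigma_cylinders_off_active (w : 'I_d -> R) (a : R) :
  <<s cylinders_off >> [set t | (0 < 1 - a * \sum_(j < d | j != i) w j * X j t)%R].
Proof.
have mS : measurable_fun (setT : set (g_sigma_algebraType cylinders_off))
    (fun t => 1 - a * \sum_(j < d) (if j != i then w j * X j t else 0))%R.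
  apply: measurable_funB; first exact: measurable_cst.
  apply: measurable_funM; first exact: measurable_cst.
  apply: measurable_sum => j; case: (boolP (j != i)) => ji; last exact: measurable_cst.
  exact: measurable_funM (measurable_cst _) (measurable_coord_off _ ji).
have -> : [set t | (0 < 1 - a * \sum_(j < d | j != i) w j * X j t)%R] =
    (fun t => 1 - a * \sum_(j < d) (if j != i then w j * X j t else 0))%R @^-1`
      `]0%R, +oo[.
  by apply/seteqP; split => t /=; rewrite in_itv /= andbT -big_mkcond.
by have := mS measurableT _ (measurable_itv `]0%R, +oo[); rewrite setTI.
Qed.

Lemma integral_setI_cond_exp (A : set T) : <<s cylinders_off >> A ->
  P.-integrable setT (EFin \o X i) ->
  \int[P]_(t in A `&` evY Y c) (X i t)%:E =
  (cond_exp P (X i) Y c * fine (P (A `&` evY Y c)))%:E.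
Proof.
move=> GA iX.
have mAF : measurable (A `&` evY Y c).
  by apply: measurableI => //; exact: sigma_cylinders_off_measurable.
have fin_int D : measurable D -> \int[P]_(t in D) (X i t)%:E \is a fin_num.
  move=> mD; apply: integrable_fin_num => //.
  exact: integrableS measurableT mD (subsetT D) iX.
have := integral_proportional_law P (mX i) mAF mYc
  (sigma_cylinders_off_proportional _ GA) iX.
rewrite -(fineK (fin_int _ mAF)) -(fineK (fin_int _ mYc)).
rewrite (finite_measureE P (evY Y c)) // (finite_measureE P (A `&` _)) //.
rewrite -!EFinM => -[h]; congr EFin; rewrite /cond_exp.
by apply: (mulIf fine_PYc_neq0); rewrite h; field.
Qed.

Lemma integral_hinge_loss_zero_coord (w : 'I_d -> R) :
  \int[P]_t (hinge_loss X Y w t)%:E < +oo ->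
  P.-integrable setT (EFin \o X i) ->
  (c * w i * cond_exp P (X i) Y c <= 0)%R ->
  \int[P]_(t in evY Y c) (hinge_loss X Y (zero_coord w i) t)%:E <=
  \int[P]_(t in evY Y c) (hinge_loss X Y w t)%:E.
Proof.
move=> hw_fin iX hs.
have mh v := measurable_hinge_loss X Y v mX mY.
pose A := [set t | (0 < 1 - c * \sum_(j < d | j != i) w j * X j t)%R].
have GA : <<s cylinders_off >> A := sigma_cylinders_off_active w c.
have mA := sigma_cylinders_off_measurable _ GA.
have mAF : measurable (A `&` evY Y c) by exact: measurableI.
pose g t := ((c * w i)%:E * (X i t)%:E).
have iw : P.-integrable (evY Y c) (fun t => (hinge_loss X Y w t)%:E).
  apply: integrableS measurableT mYc (subsetT _) _.
  apply/integrableP; split; first exact: mh.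
  by under eq_integral do rewrite gee0_abs ?lee_fin ?hinge_loss_ge0 //.
have ig : P.-integrable (evY Y c) (g \_ A).
  apply/integrable_restrict => //; apply: integrableS measurableT _ (subsetT _) _.
    exact: measurableI.
  exact: integrableZl.
have h0_le t : evY Y c t ->
    (hinge_loss X Y (zero_coord w i) t)%:E <= (hinge_loss X Y w t)%:E + (g \_ A) t.
  move=> Yt; have {}Yt : Y t = c := Yt.
  rewrite /hinge_loss sum_zero_coord [(\sum_(j < d) w j * X j t)%R](bigD1 i) //= Yt.
  set S := (\sum_(j < d | j != i) w j * X j t)%R.
  have tAE : (t \in A) = (0 < 1 - c * S)%R.
    by apply/idP/idP => [/set_mem //|?]; exact/mem_set.
  have := max0_le_max0B (1 - c * S)%R (c * w i * X i t)%R.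
  rewrite (_ : 1 - c * S - c * w i * X i t = 1 - c * (w i * X i t + S))%R; last by ring.
  rewrite /g /patch tAE; case: ifP => _; first by rewrite -EFinM -EFinD lee_fin.
  by rewrite addr0 adde0 lee_fin.
have h0_int_le : \int[P]_(t in evY Y c) (hinge_loss X Y (zero_coord w i) t)%:E <=
    \int[P]_(t in evY Y c) ((hinge_loss X Y w t)%:E + (g \_ A) t).
  apply: ge0_le_integral => //.
  - by move=> t _; rewrite lee_fin hinge_loss_ge0.
  - exact: measurable_funTS (mh _).
  - exact: measurable_int (integrableD mYc iw ig).
apply: le_trans h0_int_le _.
rewrite integralD // -integral_mkcondl integralZl //; last first.
  exact: integrableS measurableT mAF (subsetT _) iX.
rewrite (integral_setI_cond_exp _ GA iX) -EFinM; apply: geeDl; rewrite lee_fin mulrA.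
by apply: mulr_le0_ge0 => //; exact/fine_ge0/measure_ge0.
Qed.
End conditional_independence.

Lemma integrable_of_sqr {R : realType} {dT : measure_display} {T : measurableType dT}
    (mu : {finite_measure set T -> \bar R}) (f : T -> R) :
  measurable_fun setT f -> mu.-integrable setT (fun t => (f t ^+ 2)%:E) ->
  mu.-integrable setT (EFin \o f).
Proof.
move=> mf if2.
apply: (@le_integrable _ _ _ mu setT measurableT _ (fun t => (1 + f t ^+ 2)%:E)).
- exact/measurable_EFinP.
- move=> t _ /=; rewrite lee_fin; set x := f t.
  rewrite (@ger0_norm _ (1 + x ^+ 2)); last by rewrite addr_ge0 // sqr_ge0.
  by have [x0|x0] := leP 0 x; [rewrite ger0_norm | rewrite ltr0_norm]; nra.
- under eq_fun do rewrite EFinD.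
  by apply: integrableD => //; exact: finite_measure_integrable_cst.
Qed.

Section hinge_objective.
Context {R : realType} {dT : measure_display} {T : measurableType dT}.
Context (P : probability T R) {d : nat} (X : 'I_d -> T -> R) (Y : T -> R).
Variable lambda : R.
Hypothesis lambda_gt0 : 0 < lambda.

Lemma hinge_objectiveE (w : 'I_d -> R) : hinge_objective P X Y lambda w =
  (\int[P]_t (hinge_loss X Y w t)%:E + (lambda / 2 * \sum_(j < d) w j ^+ 2)%:E)%E.
Proof. by []. Qed.

Lemma hinge_objective0 : hinge_objective P X Y lambda (fun=> 0) = 1%E.
Proof.
rewrite hinge_objectiveE big1 ?mulr0 ?adde0 => [|j _]; last by rewrite expr0n.
have hinge1 t : hinge_loss X Y (fun=> 0) t = 1.
  rewrite /hinge_loss big1 => [|j _]; last exact: mul0r.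
  by rewrite mulr0 subr0 max_r.
under eq_integral do rewrite hinge1.
by rewrite integral_cst // mul1e; exact: probability_setT.
Qed.

Lemma integral_hinge_loss_le_objective (w : 'I_d -> R) :
  (\int[P]_t (hinge_loss X Y w t)%:E <= hinge_objective P X Y lambda w)%E.
Proof.
rewrite hinge_objectiveE leeDl // lee_fin mulr_ge0 ?sumr_ge0 // => [|j _].
  by rewrite divr_ge0 // ltW.
exact: sqr_ge0.
Qed.

Hypotheses (mX : forall j, measurable_fun setT (X j)) (mY : measurable_fun setT Y).
Hypothesis Ypm1 : forall t, Y t = 1 \/ Y t = -1.
Hypotheses (Y1_gt0 : (0 < P (evY Y 1))%E) (Ym1_gt0 : (0 < P (evY Y (-1)))%E).
Hypothesis hind : forall c, c = 1 \/ c = -1 -> cond_mutually_independent P X Y c.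

Lemma integral_hinge_lossE (w : 'I_d -> R) :
  (\int[P]_t (hinge_loss X Y w t)%:E =
   \int[P]_(t in evY Y 1) (hinge_loss X Y w t)%:E +
   \int[P]_(t in evY Y (-1)) (hinge_loss X Y w t)%:E)%E.
Proof.
have -> : [set: T] = evY Y 1 `|` evY Y (-1).
  by apply/seteqP; split => // t _; case: (Ypm1 t) => h; [left | right].
rewrite ge0_integral_setU //; first exact: measurable_evY.
- exact: measurable_evY.
- exact: measurable_funTS (measurable_hinge_loss X Y w mX mY).
- by move=> t _; rewrite lee_fin hinge_loss_ge0.
- rewrite disj_set2E; apply/eqP/seteqP; split => // t [Y1 Ym1].
  by have := eq_trans (esym Y1) Ym1; lra.
Qed.

Lemma hinge_objective_zero_coord_lt (w : 'I_d -> R) (i : 'I_d) :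
  P.-integrable setT (EFin \o X i) ->
  (\int[P]_t (hinge_loss X Y w t)%:E < +oo)%E -> w i != 0 ->
  (forall c, c = 1 \/ c = -1 -> c * w i * cond_exp P (X i) Y c <= 0) ->
  (hinge_objective P X Y lambda (zero_coord w i) < hinge_objective P X Y lambda w)%E.
Proof.
move=> iX hw_fin wi_neq0 hs.
have hinge_le : (\int[P]_t (hinge_loss X Y (zero_coord w i) t)%:E <=
    \int[P]_t (hinge_loss X Y w t)%:E)%E.
  rewrite !integral_hinge_lossE; apply: leeD;
    apply: integral_hinge_loss_zero_coord => //;
    [ exact: hind (or_introl erefl) | exact: hs (or_introl erefl)
    | exact: hind (or_intror erefl) | exact: hs (or_intror erefl) ].
have hinge0_fin : (\int[P]_t (hinge_loss X Y (zero_coord w i) t)%:E)%E \is a fin_num.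
  rewrite ge0_fin_numE; first exact: le_lt_trans hinge_le hw_fin.
  by apply: integral_ge0 => t _; rewrite lee_fin hinge_loss_ge0.
rewrite !hinge_objectiveE addeC [X in (_ < X)%E]addeC; apply: lte_leD => //.
by rewrite lte_fin ltr_pM2l ?divr_gt0 // sum_sqr_zero_coord_lt.
Qed.

End hinge_objective.

Theorem mainTheorem1 (R : realType) (dT : measure_display) (T : measurableType dT)
  (P : probability T R) (d : nat) (X : 'I_d -> T -> R) (Y : T -> R)
  (lambda : R) (wstar : 'I_d -> R)
  (hX : forall i, measurable_fun setT (X i))
  (hY : measurable_fun setT Y)
  (hYpm : forall t, Y t = 1 \/ Y t = -1)
  (hpos1 : (0 < P (evY Y 1))%E) (hposm1 : (0 < P (evY Y (-1)))%E)
  (h2mom : forall i, P.-integrable setT (fun t => (X i t ^+ 2)%:E))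
  (hlam : 0 < lambda)
  (hmin : forall w, (hinge_objective P X Y lambda wstar
                      <= hinge_objective P X Y lambda w)%E)
  (hind : forall c, (c = 1 \/ c = -1) -> cond_mutually_independent P X Y c)
  (i : 'I_d) :
  (cond_exp P (X i) Y (-1) <= 0 <= cond_exp P (X i) Y 1 -> 0 <= wstar i) /\
  (cond_exp P (X i) Y 1 <= 0 <= cond_exp P (X i) Y (-1) -> wstar i <= 0).
Proof.
have iX := integrable_of_sqr P (X i) (hX i) (h2mom i).
have hw_fin : (\int[P]_t (hinge_loss X Y wstar t)%:E < +oo)%E.
  apply: le_lt_trans (integral_hinge_loss_le_objective P X Y lambda hlam wstar) _.
  by apply: le_lt_trans (hmin (fun=> 0)) _; rewrite hinge_objective0 ltry.
have wi_eq0 : (forall c, c = 1 \/ c = -1 -> c * wstar i * cond_exp P (X i) Y c <= 0) ->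
    wstar i = 0.
  move=> hs; apply/eqP/negPn/negP => wi_neq0.
  have := hmin (zero_coord wstar i); rewrite leNgt => /negP; apply.
  exact: hinge_objective_zero_coord_lt.
split => /andP[e1 e2]; rewrite leNgt; apply/negP => w_sgn;
  suff : wstar i = 0 by lra.
- by apply: wi_eq0 => c [->|->]; nra.
- by apply: wi_eq0 => c [->|->]; nra.
Qed.
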